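(* Let $N=((V\cup\{s\},A),\tau)$ be an acyclic pre-flow temporal network and $k\in\mathbb{N}$. Then $\min\{k,\lambda_N(s,v)\}=\min\{k,d^-_A(v)\}$ for every $v\in V$, and there exist $k$ pairwise arc-disjoint $\tau$-respecting $s$-arborescences such that each $v\in V$ belongs to exactly $\min\{k,\lambda_N(s,v)\}$ of them.
   Context: A temporal network is a pair $N=(D,\tau)$ where $D=(V\cup\{s\},A)$ is a directed graph (parallel arcs allowed) with a root $s$ that no arc enters, and $\tau:A\to\mathbb{N}$; it is acyclic if $D$ has no directed cycle. For $i\in\mathbb{N}$, $\rho_N^i(v)=\{a \text{ entering } v:\tau(a)\le i\}$, $\delta_N^i(v)=\{a\text{ leaving } v:\tau(a)\le i\}$. $N$ is pre-flow if $|\rho_N^i(v)|\ge|\delta_N^i(v)|$ for all $i\in\mathbb{N}$ and all $v\in V$. $d^-_A(v)$ is the number of arcs entering $v$. A directed path with arcs $a_1,\dots,a_\ell$ in order is $\tau$-respecting if $\tau(a_1)\le\dots\le\tau(a_\ell)$; $\lambda_N(s,v)$ is the maximum number of pairwise arc-disjoint $\tau$-respecting $(s,v)$-paths. An $s$-arborescence is an acyclic subgraph $F=(V'\cup\{s\},A')$, $V'\subseteq V$, in which each vertex of $V'$ has in-degree exactly $1$; it is $\tau$-respecting if every path in it from $s$ is $\tau$-respecting. *)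

From mathcomp Require Import all_boot.
From Stdlib Require Import ClassicalEpsilon.

Set Implicit Arguments.
Unset Strict Implicit.
Unset Printing Implicit Defensive.

Definition pb (P : Prop) : bool :=
  if excluded_middle_informative P then true else false.

(* A temporal network is given by a finite vertex type T (containing the root s,
   i.e. T = V ∪ {s}), a finite arc type Arc (parallel arcs allowed),
   tail/head maps and a time labelling tau : Arc -> nat. *)
Section TemporalNetwork.
Variables (T Arc : finType) (s : T) (tail head : Arc -> T) (tau : Arc -> nat).

Fixpoint walk (x : T) (p : seq Arc) (y : T) : bool :=
  match p with
  | [::] => x == y
  | a :: p' => (tail a == x) && walk (head a) p' y
  end.

Definition dpath (x : T) (p : seq Arc) (y : T) : bool :=
  walk x p y && uniq (x :: map head p).

Definition tresp (p : seq Arc) : bool := sorted leq (map tau p).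

Definition acyclic_on (A' : {set Arc}) : Prop :=
  forall (x : T) (p : seq Arc), p != [::] -> all (fun a => a \in A') p ->
    ~~ walk x p x.

Definition acyclic : Prop := acyclic_on setT.

Definition rho (i : nat) (v : T) : {set Arc} := [set a | (head a == v) && (tau a <= i)].
Definition delta (i : nat) (v : T) : {set Arc} := [set a | (tail a == v) && (tau a <= i)].

Definition preflow : Prop :=
  forall (i : nat) (v : T), v != s -> #|delta i v| <= #|rho i v|.

Definition indeg (v : T) : nat := #|[set a | head a == v]|.

Definition has_disj_paths (v : T) (m : nat) : Prop :=
  exists P : 'I_m -> seq Arc,
    (forall i, dpath s (P i) v && tresp (P i)) /\
    (forall i j, i != j -> [disjoint P i & P j]).

(* lambda_N(s,v): the maximum such m.  For v <> s every (s,v)-path has an arc,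
   so m <= #|Arc| and the maximum over 0..#|Arc| is the true maximum. *)
Definition lambda (v : T) : nat :=
  \max_(m < #|Arc|.+1 | pb (has_disj_paths v m)) m.

(* F = (V' ∪ {s}, A') with V' ⊆ V is an s-arborescence *)
Definition arborescence (F : {set T} * {set Arc}) : Prop :=
  let: (V', A') := F in
  [/\ s \notin V',
      (forall a, a \in A' -> (tail a \in s |: V') && (head a \in s |: V')),
      acyclic_on A' &
      (forall v, v \in V' -> #|[set a in A' | head a == v]| = 1)].

Definition tresp_arb (F : {set T} * {set Arc}) : Prop :=
  forall (y : T) (p : seq Arc), all (fun a => a \in F.2) p -> dpath s p y -> tresp p.

End TemporalNetwork.

(* Induction on the number of arcs that do not leave the root s.  If there is
   such an arc, acyclicity yields a vertex v <> s with an out-arc all of whose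
   in-arcs leave s.  Making the out-arcs of v leave s instead keeps the network
   acyclic and pre-flow, so by induction it carries a packing of k
   arborescences.  Give v back to the i-th arborescence through one of its own
   in-arcs, no later than the earliest arc of that arborescence leaving v: the
   pre-flow condition at v is exactly Hall's condition for this assignment,
   which a greedy matching realises.  For k = d^-(v) the packing yields d^-(v)
   arc-disjoint tau-respecting (s,v)-paths, so lambda(s,v) = d^-(v). *)

From HB Require Import structures.
From mathcomp Require Import all_boot zify.
From Stdlib Require Import ClassicalEpsilon.

Set Implicit Arguments.
Unset Strict Implicit.
Unset Printing Implicit Defensive.

Lemma disjointP (T : finType) (A B : {pred T}) :
  reflect (forall x, x \in A -> x \in B -> False) [disjoint A & B].
Proof.
apply: (iffP idP) => [AB x xA|AB]; first by rewrite (disjointFr AB xA).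
by apply/pred0P => x /=; apply/negbTE/andP => -[]; exact: AB.
Qed.

Lemma card_ord_lt k d : #|[set i : 'I_k | i < d]| = minn k d.
Proof.
have le_min : minn k d <= k by exact: geq_minl.
have -> : [set i : 'I_k | i < d] = widen_ord le_min @: setT.
  apply/setP => i; rewrite inE; apply/idP/imsetP => [id|[j _ ->] /=].
    have lt_i : i < minn k d by rewrite leq_min ltn_ord id.
    by exists (Ordinal lt_i) => //; apply: val_inj.
  exact: leq_trans (ltn_ord j) (geq_minr _ _).
rewrite card_imset ?cardsT ?card_ord //.
by move=> i j /(congr1 val) /= /val_inj.
Qed.

Lemma subset_card_extend (I : finType) (J : {set I}) m :
  #|J| <= m -> m <= #|I| -> exists2 K : {set I}, J \subset K & #|K| = m.
Proof.
move Hn : (m - #|J|) => n; elim: n J Hn => [|n IH] J Hn leJm lemI.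
  by exists J => //; apply/eqP; rewrite eqn_leq leJm -subn_eq0 Hn.
have /card_gt0P [x] : 0 < #|~: J| by have := cardsC J; lia.
rewrite inE => xJ.
have [|||K sJK cardK] := IH (x |: J); rewrite ?cardsU1 ?xJ //; try lia.
by exists K => //; exact: subset_trans (subsetUr [set x] J) sJK.
Qed.

(* Greedy: the index with the smallest threshold takes the earliest element. *)
Lemma threshold_matching (I B : finType) (b0 : B) (c : I -> nat) (t : B -> nat)
    (K : {set I}) (S : {set B}) :
  (forall x, #|[set i in K | c i <= x]| <= #|[set b in S | t b <= x]|) ->
  exists g : I -> B,
    {in K &, injective g} /\ {in K, forall i, (g i \in S) && (t (g i) <= c i)}.
Proof.
move Hn : #|K| => n; elim: n K S Hn => [|n IH] K S cardK hall.
  by exists (fun=> b0); rewrite (cards0_eq cardK); split => i; rewrite inE.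
have /card_gt0P [i1 i1K] : 0 < #|K| by rewrite cardK.
have [i0 i0K min_i0] := arg_minnP (P := [in K]) c i1K.
have [b1] : exists b, b \in [set b in S | t b <= c i0].
  apply/card_gt0P; apply: leq_trans (hall (c i0)).
  by apply/card_gt0P; exists i0; rewrite inE i0K /=.
rewrite inE => /andP [b1S tb1].
have [bm bmS min_bm] := arg_minnP (P := [in S]) t b1S.
have tbm : t bm <= c i0 by exact: leq_trans (min_bm _ b1S) tb1.
have [||g [inj_g gS]] := IH (K :\ i0) (S :\ bm).
- by move: cardK; rewrite (cardsD1 i0) i0K => -[].
- move=> x; case: (leqP (c i0) x) => [le_i0x|lt_xi0].
    have := hall x; rewrite (cardsD1 i0) (cardsD1 bm) !inE i0K bmS le_i0x.
    rewrite (leq_trans tbm le_i0x) !add1n ltnS.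
    by congr (_ <= _); apply: eq_card => y; rewrite !inE -!andbA.
  suff -> : [set i in K :\ i0 | c i <= x] = set0 by rewrite cards0.
  apply/setP => i; rewrite !inE; apply/negP => /andP [/andP [_ iK]].
  by rewrite leqNgt (leq_trans lt_xi0) ?min_i0.
exists (fun i => if i == i0 then bm else g i); split.
  move=> i j iK jK /=.
  have gD l : l \in K -> l != i0 -> g l != bm.
    by move=> lK nl; have := gS l; rewrite !inE nl lK => /(_ isT) /andP [/andP []].
  case: eqVneq => [->|ni]; case: eqVneq => [->|nj] //.
  - by move=> bmj; move: (gD j jK nj); rewrite bmj eqxx.
  - by move=> gib; move: (gD i iK ni); rewrite gib eqxx.
  - by apply: inj_g; rewrite !inE ?ni ?nj.
move=> i iK /=; case: eqVneq => [->|ni]; first by rewrite bmS.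
by have := gS i; rewrite !inE ni iK => /(_ isT) /andP [/andP [_ ->] ->].
Qed.

Section Walks.
Variables (T Arc : finType) (tail head : Arc -> T).
Implicit Types (x y : T) (p : seq Arc) (A : {set Arc}).

Lemma walk_tail_in x p y b :
  walk tail head x p y -> b \in p -> tail b \in x :: map head p.
Proof.
elim: p x => [//|a p IH] x /= /andP [/eqP <- w].
rewrite in_cons => /orP [/eqP -> | /(IH _ w)]; first exact: mem_head.
by rewrite !in_cons => /orP [-> | ->]; rewrite ?orbT.
Qed.

Lemma walk_head_last x p y : walk tail head x p y -> p != [::] ->
  exists2 b, b \in p & head b = y.
Proof.
elim: p x => [//|a p IH] x /= /andP [_ w] _.
case: p IH w => [|a' p] IH w; first by exists a; rewrite ?mem_head ?(eqP w).
by have [b bp hb] := IH _ w isT; exists b; rewrite // in_cons bp orbT.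
Qed.

Lemma walk_prefix_to_head x p y z : walk tail head x p y -> z \in map head p ->
  exists2 q, q != [::] & {subset q <= p} /\ walk tail head x q z.
Proof.
elim: p x => [//|a p IH] x /= /andP [ta w]; rewrite in_cons => /orP [/eqP -> | zp].
  exists [:: a] => //; split; last by rewrite /= ta eqxx.
  by move=> b; rewrite inE => /eqP ->; exact: mem_head.
have [q qn [sqp wq]] := IH _ w zp.
exists (a :: q) => //; split; last by rewrite /= ta.
by move=> b; rewrite !in_cons => /orP [-> | /sqp ->]; rewrite ?orbT.
Qed.

Lemma walk_not_uniq_cycle x p y : walk tail head x p y -> ~~ uniq (x :: map head p) ->
  exists z q, [/\ q != [::], {subset q <= p} & walk tail head z q z].
Proof.
elim: p x => [//|a p IH] x w; rewrite cons_uniq negb_and negbK => /orP [xp | nu].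
  by have [q qn [sqp wq]] := walk_prefix_to_head w xp; exists x, q.
move: w => /= /andP [_ w]; have [z [q [qn sqp wq]]] := IH _ w nu.
by exists z, q; split => // b /sqp; rewrite in_cons => ->; rewrite orbT.
Qed.

Lemma acyclic_on_walk_uniq A x p y : acyclic_on tail head A ->
  walk tail head x p y -> all (fun a => a \in A) p -> uniq (x :: map head p).
Proof.
move=> acA w /allP pA; apply/negPn/negP => /(walk_not_uniq_cycle w) [z [q [qn sqp wq]]].
have qA : all (fun a => a \in A) q by apply/allP => b /sqp /pA.
by move: (acA z q qn qA); rewrite wq.
Qed.

Lemma acyclic_on_walk_size A x p y : acyclic_on tail head A ->
  walk tail head x p y -> all (fun a => a \in A) p -> size p < #|T|.
Proof.
move=> acA w pA; have := max_card (mem (x :: map head p)).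
by rewrite (card_uniqP (acyclic_on_walk_uniq acA w pA)) /= size_map.
Qed.

Lemma walk_tail_first x p y b : walk tail head x p y -> x \notin map head p ->
  b \in p -> tail b = x -> exists p', p = b :: p'.
Proof.
case: p => [//|a p] w xp; rewrite in_cons => /orP [/eqP -> _|bp tb]; first by exists p.
move: w xp => /= /andP [_ w]; rewrite in_cons negb_or => /andP [xa xp].
by move: (walk_tail_in w bp); rewrite tb in_cons (negbTE xa) (negbTE xp).
Qed.

Lemma acyclic_on_minimal A (P : T -> Prop) y : acyclic_on tail head A -> P y ->
  exists2 x, P x & forall b, b \in A -> head b = x -> ~ P (tail b).
Proof.
move=> acA Py; apply: NNPP => no_min.
have step x : P x -> exists2 b, b \in A & head b = x /\ P (tail b).
  move=> Px; apply: NNPP => no_b; apply: no_min; exists x => // b bA hb Pb.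
  by apply: no_b; exists b.
have long n : exists x p,
    [/\ P x, size p = n, walk tail head x p y & all (fun a => a \in A) p].
  elim: n => [|n [x [p [Px <- w pA]]]]; first by exists y, [::]; rewrite /= eqxx.
  have [b bA [hb Pb]] := step x Px.
  by exists (tail b), (b :: p); rewrite /= hb eqxx w bA pA.
have [x [p [_ size_p w pA]]] := long #|T|.
by have := acyclic_on_walk_size acA w pA; rewrite size_p ltnn.
Qed.

End Walks.

Section Arborescences.
Variables (T Arc : finType) (s : T) (tail head : Arc -> T).

Lemma arborescence_path F w : arborescence s tail head F -> w \in F.1 ->
  exists p, dpath tail head s p w && all (fun a => a \in F.2) p.
Proof.
case: F => V' A' [_ ends acA indeg1] /= wV'.
pose P x := x \in V' /\ exists q, walk tail head x q w && all (fun a => a \in A') q.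
have [|x [xV' [q /andP [wq qA]]] min_x] := acyclic_on_minimal (P := P) (y := w) acA.
  by split => //; exists [::]; rewrite /= eqxx.
have /eqP/cards1P [b in_x] := indeg1 x xV'.
have : b \in [set a in A' | head a == x] by rewrite in_x set11.
rewrite inE => /andP [bA /eqP hb].
have tb : tail b = s.
  have /andP [+ _] := ends b bA; rewrite !inE => /orP [/eqP // | tbV'].
  exfalso; apply: (min_x b bA hb); split => //.
  by exists (b :: q); rewrite /= hb eqxx wq bA.
have wbq : walk tail head s (b :: q) w by rewrite /= tb hb eqxx.
have bqA : all (fun a => a \in A') (b :: q) by rewrite /= bA.
by exists (b :: q); rewrite /dpath wbq (acyclic_on_walk_uniq acA wbq bqA).
Qed.

Lemma exists_vertex_fed_by_root a0 : acyclic tail head -> tail a0 != s ->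
  exists v, [/\ v != s, exists a, tail a = v & forall b, head b = v -> tail b = s].
Proof.
move=> ac ta0.
pose P x := x != s /\ exists a, tail a = x.
have [|v [vs out_v] min_v] := acyclic_on_minimal (P := P) (y := tail a0) ac.
  by split => //; exists a0.
exists v; split => // b hb; apply/eqP/negPn/negP => tbs.
by apply: (min_v b _ hb) => //; split => //; exists b.
Qed.

End Arborescences.

Section Packing.
Variables (T Arc : finType) (s : T) (head : Arc -> T) (tau : Arc -> nat).
Hypothesis head_neq_root : forall a, head a != s.

Definition arborescence_packing (tail : Arc -> T) k
    (F : 'I_k -> {set T} * {set Arc}) : Prop :=
  [/\ forall i, arborescence s tail head (F i),
      forall i, tresp_arb s tail head tau (F i),
      forall i j, i != j -> [disjoint (F i).2 & (F j).2] &
      forall w, w != s -> #|[set i | w \in (F i).1]| = minn k (indeg head w)].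

Lemma root_not_head p : s \notin map head p.
Proof. by apply/mapP => -[b _ sb]; move: (head_neq_root b); rewrite -sb eqxx. Qed.

(* When all arcs leave the root, the i-th arborescence takes the i-th arc into
   each vertex, in the enumeration order of its in-arcs. *)
Lemma star_packing (tail : Arc -> T) k : acyclic tail head ->
  (forall a, tail a = s) -> exists F, @arborescence_packing tail k F.
Proof.
move=> ac tail_s.
pose into w := enum [set b | head b == w].
pose rank a := index a (into (head a)).
have size_into w : size (into w) = indeg head w by rewrite -cardE.
exists (fun i => ([set w | (w != s) && (i < indeg head w)], [set a | rank a == i])).
split=> [i|i y|i j ij|w ws] /=.
- split=> [|a|x p pn _|w] /=; rewrite ?inE ?eqxx //.
  + move=> /eqP <-; rewrite tail_s eqxx (negbTE (head_neq_root a)) /= -size_into.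
    by rewrite index_mem mem_enum inE.
  + by apply: ac pn _; apply/allP => b; rewrite inE.
  move=> /andP [_ iw].
  have /card_gt0P [a0 _] : 0 < indeg head w by exact: leq_ltn_trans iw.
  apply/eqP/cards1P; exists (nth a0 (into w) i); apply/setP => a; rewrite !inE.
  have into_nth : nth a0 (into w) i \in into w by rewrite mem_nth ?size_into.
  apply/andP/eqP => [[/eqP <- /eqP hw]|->].
    by rewrite /rank hw nth_index ?mem_enum ?inE ?hw.
  move: (into_nth); rewrite mem_enum inE => /eqP hw.
  by rewrite /rank hw index_uniq ?enum_uniq ?size_into ?eqxx.
- case=> [|a [|b p]] //= _ /andP [/andP [_ /andP [/eqP tb _]] _].
  by move: (head_neq_root a); rewrite -tb tail_s eqxx.
- apply/disjointP => a; rewrite !inE => /eqP -> /eqP /val_inj eq_ij.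
  by rewrite eq_ij eqxx in ij.
rewrite -card_ord_lt; apply: eq_card => i; by rewrite !inE ws.
Qed.

End Packing.

Section Redirect.
Variables (T Arc : finType) (s : T) (tail head : Arc -> T) (tau : Arc -> nat) (v : T).
Hypothesis head_neq_root : forall a, head a != s.

Definition redirect a := if tail a == v then s else tail a.

Lemma walk_redirect x p y : walk tail head x p y -> x != v -> v \notin map head p ->
  walk redirect head x p y.
Proof.
elim: p x => [//|a p IH] x /= /andP [/eqP ta w] xv; rewrite in_cons negb_or.
by move=> /andP [hv vp]; rewrite /redirect ta (negbTE xv) eqxx IH // eq_sym.
Qed.

Lemma walk_redirect_from x a p y : walk tail head x (a :: p) y -> x = v ->
  v \notin map head (a :: p) -> walk redirect head s (a :: p) y.
Proof.
move=> /= /andP [/eqP ta w] xv; rewrite in_cons negb_or => /andP [hv vp].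
by rewrite /redirect ta xv !eqxx /= (walk_redirect w) // eq_sym.
Qed.

Lemma walk_of_redirect x p y : x != s -> walk redirect head x p y -> walk tail head x p y.
Proof.
elim: p x => [//|a p IH] x xs /= /andP [ta w]; move: ta; rewrite /redirect.
by case: ifP => [_ /eqP sx|_ ->]; [rewrite sx eqxx in xs | exact: IH].
Qed.

Lemma acyclic_redirect : acyclic tail head -> acyclic redirect head.
Proof.
move=> ac x p pn pA; apply/negP => w.
have [b _ hb] := walk_head_last w pn.
have xs : x != s by rewrite -hb head_neq_root.
by move: (ac x p pn pA); rewrite (walk_of_redirect xs w).
Qed.

Lemma preflow_redirect : preflow s tail head tau -> preflow s redirect head tau.
Proof.
move=> pf i w ws; apply: leq_trans (pf i w ws); apply/subset_leq_card/subsetP => a.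
rewrite !inE /redirect; case: ifP => // _ /andP [/eqP sw].
by rewrite sw eqxx in ws.
Qed.

Lemma card_redirect_lt a : v != s -> tail a = v ->
  #|[set a | redirect a != s]| < #|[set a | tail a != s]|.
Proof.
move=> vs ta; apply/proper_card/properP; split.
  by apply/subsetP => b; rewrite !inE /redirect; case: ifP; rewrite ?eqxx.
by exists a; rewrite !inE /redirect ta ?eqxx.
Qed.

End Redirect.

HB.instance Definition _ := SemiGroup.isComLaw.Build nat minn minnA minnC.

Section Step.
Variables (T Arc : finType) (s : T) (tail head : Arc -> T) (tau : Arc -> nat).
Variables (v : T) (a0 : Arc) (k : nat).
Hypotheses (head_neq_root : forall a, head a != s) (ac : acyclic tail head)
  (pf : preflow s tail head tau) (vs : v != s)
  (fed_v : forall b, head b = v -> tail b = s).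

Variable F' : 'I_k -> {set T} * {set Arc}.
Hypothesis packF' : arborescence_packing s head tau (redirect s tail v) F'.

Let out i := [set a in (F' i).2 | tail a == v].
Let tau_max := \max_a tau a.
(* [tau_max] when no arc of the i-th arborescence leaves v *)
Let deadline i := \big[minn/tau_max]_(a in out i) tau a.
Let into_v := [set b | head b == v].
Let leaving := [set i | out i != set0].

Lemma deadline_le i a : a \in out i -> deadline i <= tau a.
Proof. by move=> aO; rewrite /deadline (bigD1 a) //= geq_minl. Qed.

Lemma deadline_attained i x : x < tau_max -> deadline i <= x ->
  [exists a in out i, tau a <= x].
Proof.
move=> lt_x; apply: contraTT => /existsPn late; rewrite -ltnNge.
apply: (big_ind (fun y => x < y)) => // [y z|a aO]; first by rewrite leq_min => ->.
by have := late a; rewrite aO ltnNge.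
Qed.

(* Distinct arborescences use distinct arcs leaving v, so the pre-flow
   condition at v bounds how many of them can leave v by time x. *)
Lemma card_early_out x :
  #|[set i | [exists a in out i, tau a <= x]]| <= #|rho head tau x v|.
Proof.
case: packF' => _ _ disjF' _.
pose early i := odflt a0 [pick a in out i | tau a <= x].
set I := [set i | _].
have earlyP i : i \in I -> (early i \in out i) && (tau (early i) <= x).
  rewrite inE /early => /existsP [a /andP [aO ta]].
  by case: pickP => [b /andP [-> ->] //|/(_ a)]; rewrite aO ta.
have inj_early : {in I &, injective early}.
  move=> i j iI jI eq_ij; apply/eqP/negPn/negP.
  move=> /disjF' /disjointP /(_ (early i)); apply.
  - by have /andP [] := earlyP i iI; rewrite inE => /andP [].
  - by have /andP [] := earlyP j jI; rewrite inE -eq_ij => /andP [].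
rewrite -(card_in_imset inj_early); apply: leq_trans (pf x vs).
apply/subset_leq_card/subsetP => _ /imsetP [i iI ->].
by have /andP [] := earlyP i iI; rewrite !inE => /andP [_ ->] ->.
Qed.

Lemma tau_le_max a : tau a <= tau_max.
Proof. exact: leq_bigmax. Qed.

Lemma card_leaving : #|leaving| <= minn k (indeg head v).
Proof.
rewrite leq_min; apply/andP; split; first by rewrite -[leqRHS]card_ord max_card.
apply: leq_trans (leq_trans (card_early_out tau_max) _).
  apply/subset_leq_card/subsetP => i; rewrite !inE => /set0Pn [a aO].
  by apply/existsP; exists a; rewrite aO tau_le_max.
by apply/subset_leq_card/subsetP => b; rewrite !inE => /andP [].
Qed.

Lemma matching_condition (K : {set 'I_k}) :
  leaving \subset K -> #|K| = minn k (indeg head v) ->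
  forall x, #|[set i in K | deadline i <= x]| <= #|[set b in into_v | tau b <= x]|.
Proof.
move=> leavingK cardK x; case: (leqP tau_max x) => [le_max|lt_max].
  rewrite (eq_card (B := into_v)) => [|b]; last first.
    by rewrite !inE (leq_trans (tau_le_max b)) ?andbT.
  apply: (@leq_trans #|K|); last by rewrite cardK geq_minr.
  by apply/subset_leq_card/subsetP => i; rewrite inE => /andP [].
apply: leq_trans (leq_trans (card_early_out x) _).
  apply/subset_leq_card/subsetP => i; rewrite !inE => /andP [_].
  exact: deadline_attained.
by apply/eq_leq/eq_card => b; rewrite !inE.
Qed.

Section Reattach.
Variables (K : {set 'I_k}) (g : 'I_k -> Arc).
Hypotheses (leavingK : leaving \subset K) (cardK : #|K| = minn k (indeg head v))
  (inj_g : {in K &, injective g})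
  (gP : {in K, forall i, (g i \in into_v) && (tau (g i) <= deadline i)}).

Let FV i := [set w | if w == v then i \in K else w \in (F' i).1].
Let FA i :=
  [set a | if head a == v then (i \in K) && (a == g i) else a \in (F' i).2].

Lemma head_g i : i \in K -> head (g i) = v.
Proof. by move=> iK; have /andP [] := gP iK; rewrite inE => /eqP. Qed.

Lemma FA_into_v i a : a \in FA i -> head a = v -> i \in K /\ a = g i.
Proof. by rewrite inE => + hv; rewrite hv eqxx => /andP [-> /eqP]. Qed.

Lemma FA_F' i a : a \in FA i -> head a != v -> a \in (F' i).2.
Proof. by rewrite inE => + /negbTE hv; rewrite hv. Qed.

Lemma reattach_arborescence i : arborescence s tail head (FV i, FA i).
Proof.
case: packF' => arbF' _ _ _.
have := arbF' i; rewrite [F' i]surjective_pairing => -[sV' ends' _ in1']; split.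
- by rewrite inE eq_sym (negbTE vs).
- move=> a aA; case: (eqVneq (head a) v) => hv.
    have [iK ->] := FA_into_v aA hv.
    by rewrite (fed_v (head_g iK)) head_g // !inE !eqxx iK orbT.
  have /andP [] := ends' a (FA_F' aA hv); rewrite !inE (negbTE hv) => + ->.
  rewrite andbT /redirect; case: (eqVneq (tail a) v) => [tv _|//].
  apply/orP; right; apply: (subsetP leavingK); rewrite inE.
  by apply/set0Pn; exists a; rewrite inE (FA_F' aA hv) tv eqxx.
- by move=> x p pn _; apply: ac pn _; apply/allP => b; rewrite inE.
move=> w; rewrite inE; case: eqVneq => [-> iK|wv wV'].
  apply/eqP/cards1P; exists (g i); apply/setP => a; rewrite !inE.
  case: (eqVneq (head a) v) => [_|hv]; first by rewrite iK andbT.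
  by rewrite andbF; apply/esym/eqP => ag; move: hv; rewrite ag head_g ?eqxx.
rewrite -(in1' w wV'); apply: eq_card => a; rewrite !inE.
by case: (eqVneq (head a) v) => // ->; rewrite [v == w]eq_sym (negbTE wv) !andbF.
Qed.

Lemma FA_avoiding_v i p : all (fun a => a \in FA i) p -> v \notin map head p ->
  all (fun a => a \in (F' i).2) p.
Proof.
move=> /allP pA vp; apply/allP => a ap; apply: FA_F' (pA a ap) _.
by apply: contraNneq vp => <-; exact: map_f.
Qed.

(* A path of the new arborescence through v enters v by its first arc g i,
   and the next arc leaves v no earlier than deadline i >= tau (g i). *)
Lemma reattach_tresp i : tresp_arb s tail head tau (FV i, FA i).
Proof.
case: packF' => _ trF' _ _; move=> y p /= pA /andP [w up].
case: (boolP (v \in map head p)) => [/mapP [b bp hb] | vp]; last first.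
  apply: (trF' i y p); first exact: FA_avoiding_v.
  by rewrite /dpath up andbT walk_redirect // eq_sym.
have [iK bg] := FA_into_v (allP pA b bp) (esym hb).
have [p' def_p] := walk_tail_first w (root_not_head head_neq_root p) bp (fed_v (esym hb)).
move: w up pA; rewrite {p bp}def_p => /= /andP [_ w] /andP [_ up] /andP [_ p'A].
case: p' => [//|a p''] in w up p'A *.
have vp' : v \notin map head (a :: p'') by move: up; rewrite -hb cons_uniq => /andP [].
have p'F' := FA_avoiding_v p'A vp'.
have ta : tail a = v by move: w => /= /andP [/eqP -> _].
have aO : a \in out i by rewrite inE ta eqxx andbT; have /andP [] := p'F'.
have tresp_p' : tresp tau (a :: p'').
  apply: (trF' i y _ p'F'); rewrite /dpath (walk_redirect_from s w (esym hb) vp') /=.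
  move: up => /andP [_ /= ->]; rewrite andbT.
  exact: (root_not_head head_neq_root (a :: p'')).
rewrite /tresp /=; apply/andP; split; last exact: tresp_p'.
have /andP [_ g_early] := gP iK; rewrite bg.
exact: leq_trans g_early (deadline_le aO).
Qed.

Lemma reattach_packing : exists F, arborescence_packing s head tau tail (k := k) F.
Proof.
case: packF' => _ _ disjF' countF'.
exists (fun i => (FV i, FA i)); split=> [i|i|i j ij|w ws] /=.
- exact: reattach_arborescence.
- exact: reattach_tresp.
- apply/disjointP => a aAi aAj; case: (eqVneq (head a) v) => hv.
    have [iK ai] := FA_into_v aAi hv; have [jK aj] := FA_into_v aAj hv.
    by move: ij; rewrite (inj_g iK jK (etrans (esym ai) aj)) eqxx.
  by move: (disjF' i j ij) => /disjointFr /(_ (FA_F' aAi hv)); rewrite (FA_F' aAj hv).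
case: (eqVneq w v) => [->|wv]; last first.
  by rewrite -(countF' w ws); apply: eq_card => i; rewrite !inE (negbTE wv).
by rewrite -cardK; apply: eq_card => i; rewrite !inE eqxx.
Qed.

End Reattach.

Lemma step_packing : exists F, arborescence_packing s head tau tail (k := k) F.
Proof.
have le_m : minn k (indeg head v) <= #|'I_k| by rewrite card_ord geq_minl.
have [K leavingK cardK] := subset_card_extend card_leaving le_m.
have [g [inj_g gP]] := threshold_matching a0 (matching_condition leavingK cardK).
exact: reattach_packing leavingK cardK inj_g gP.
Qed.

End Step.

Section Existence.
Variables (T Arc : finType) (s : T) (head : Arc -> T) (tau : Arc -> nat).
Hypothesis head_neq_root : forall a, head a != s.

Lemma packing_exists k tail : acyclic tail head -> preflow s tail head tau ->
  exists F, arborescence_packing s head tau tail (k := k) F.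
Proof.
move: {2}#|_| (leqnn #|[set a | tail a != s]|) => n.
elim: n tail => [|n IH] tail le_n ac pf;
  (case: (pickP (fun a => tail a != s)) => [a0 ta0 | tail_s];
   last by apply: star_packing => // a; apply/eqP/negbFE/tail_s).
  by move: le_n; rewrite leqn0 cards_eq0 => /eqP/setP/(_ a0); rewrite !inE ta0.
have [v [vs [a1 ta1] fed_v]] := exists_vertex_fed_by_root ac ta0.
have [|||F' packF'] := IH (redirect s tail v).
- by rewrite -ltnS; exact: leq_trans (card_redirect_lt vs ta1) le_n.
- exact: acyclic_redirect.
- exact: preflow_redirect.
exact: (step_packing a0 head_neq_root ac pf vs fed_v packF').
Qed.

End Existence.

Lemma pbE (P : Prop) : pb P = true <-> P.
Proof. by rewrite /pb; case: excluded_middle_informative. Qed.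

Section Lambda.
Variables (T Arc : finType) (s : T) (tail head : Arc -> T) (tau : Arc -> nat).

Lemma disj_paths_le_indeg v m : v != s ->
  has_disj_paths s tail head tau v m -> m <= indeg head v.
Proof.
move=> vs [P [pathP disjP]].
have last_arc i : exists b, (b \in P i) && (head b == v).
  have /andP [/andP [w _] _] := pathP i.
  have [|b bp hb] := walk_head_last w; last by exists b; rewrite bp hb eqxx.
  by apply: contraNneq vs => Pi; move: w; rewrite Pi /= eq_sym.
pose f i := xchoose (last_arc i).
have fP i : (f i \in P i) && (head (f i) == v) := xchooseP (last_arc i).
have inj_f : injective f.
  move=> i j eq_ij; apply/eqP/negPn/negP => /disjP /disjointP /(_ (f i)); apply.
  - by case/andP: (fP i).
  - by rewrite eq_ij; case/andP: (fP j).
rewrite -[m]card_ord -(card_imset _ inj_f); apply/subset_leq_card/subsetP.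
by move=> _ /imsetP [i _ ->]; rewrite inE; case/andP: (fP i).
Qed.

Lemma packing_disj_paths v : v != s ->
  (exists F, arborescence_packing s head tau tail (k := indeg head v) F) ->
  has_disj_paths s tail head tau v (indeg head v).
Proof.
move=> vs [F [arbF trF disjF countF]].
have vF i : v \in (F i).1.
  have all_v : #|[set i | v \in (F i).1]| = #|[set: 'I_(indeg head v)]|.
    by rewrite countF // minnn cardsT card_ord.
  by move: (in_setT i); rewrite -(subset_cardP all_v (subsetT _)) inE.
have path_in i := arborescence_path (arbF i) (vF i).
exists (fun i => xchoose (path_in i)); split => [i|i j ij].
  by have /andP [dp pA] := xchooseP (path_in i); rewrite dp (trF i v _ pA dp).
have /andP [_ /allP pA_i] := xchooseP (path_in i).
have /andP [_ /allP pA_j] := xchooseP (path_in j).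
apply/disjointP => a /pA_i ai /pA_j aj.
by move: (disjF i j ij) => /disjointFr /(_ ai); rewrite aj.
Qed.

Lemma lambda_eq_indeg v : v != s ->
  has_disj_paths s tail head tau v (indeg head v) ->
  lambda s tail head tau v = indeg head v.
Proof.
move=> vs paths_v; apply/eqP; rewrite eqn_leq; apply/andP; split.
  by apply/bigmax_leqP => m /pbE; exact: disj_paths_le_indeg.
have lt_indeg : indeg head v < #|Arc|.+1 by rewrite ltnS max_card.
apply: (leq_bigmax_cond (F := fun m : 'I_#|Arc|.+1 => val m) (Ordinal lt_indeg)).
exact/pbE.
Qed.

End Lambda.

Theorem mainTheorem2 (T Arc : finType) (s : T) (tail head : Arc -> T)
    (tau : Arc -> nat) (k : nat) :
  (forall a : Arc, head a != s) ->
  acyclic tail head ->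
  preflow s tail head tau ->
  (forall v : T, v != s ->
     minn k (lambda s tail head tau v) = minn k (indeg head v)) /\
  (exists F : 'I_k -> {set T} * {set Arc},
     [/\ (forall i, arborescence s tail head (F i)),
         (forall i, tresp_arb s tail head tau (F i)),
         (forall i j, i != j -> [disjoint (F i).2 & (F j).2]) &
         (forall v : T, v != s ->
            #|[set i | v \in (F i).1]| = minn k (lambda s tail head tau v))]).
Proof.
move=> head_neq_root ac pf.
have lambdaE v : v != s -> lambda s tail head tau v = indeg head v.
  move=> vs; apply/lambda_eq_indeg/packing_disj_paths => //.
  exact: packing_exists.
have [F [arbF trF disjF countF]] := packing_exists head_neq_root k ac pf.
split=> [v vs|]; first by rewrite lambdaE.
by exists F; split => // v vs; rewrite lambdaE ?countF.
Qed.
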